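(* Suppose each $X_k$ is a partially ordered set, and $f\colon\prod_{i\in[n]}X_i\to Y$ satisfies condition (BC) and is order-preserving with respect to the componentwise order. Then each $\Phi_k^-$ and $\Phi_k^+$ ($k\in[n]$) is order-preserving. Consequently, if moreover $f$ is a pseudo-polynomial function, then there exist a polynomial function $p\colon Y^n\to Y$ and order-preserving maps $\varphi_k\colon X_k\to Y$ satisfying the boundary condition such that $f(\mathbf{x})=p(\varphi_1(x_1),\ldots,\varphi_n(x_n))$ for all $\mathbf{x}$.
   Context: $Y$ is a finite distributive lattice identified with a sublattice of $\mathcal{P}(U)$ for a finite set $U$, with least element $0=\emptyset$, greatest element $1=U$, and $\wedge,\vee$ being intersection and union; $\overline{S}=U\setminus S$. For $S\subseteq U$, $\operatorname{cl}(S)=\bigwedge\{y\in Y: y\ge S\}$, $\operatorname{int}(S)=\bigvee\{y\in Y: y\le S\}$. $[n]=\{1,\ldots,n\}$; $X_1,\ldots,X_n$ are sets with at least two elements, each with two fixed distinct elements $0_{X_k},1_{X_k}$ (written $0,1$). For $\mathbf{x}\in\prod_i X_i$ and $a\in X_k$, $\mathbf{x}_k^a$ is $\mathbf{x}$ with $k$-th component replaced by $a$. A map $\varphi_k\colon X_k\to Y$ satisfies the boundary condition if $\varphi_k(0_{X_k})\le\varphi_k(x_k)\le\varphi_k(1_{X_k})$ for all $x_k$. A polynomial function $Y^n\to Y$ is a composition of $\wedge,\vee$ with variables and constants. $f$ is a pseudo-polynomial function if $f(\mathbf{x})=p(\varphi_1(x_1),\ldots,\varphi_n(x_n))$ for some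 polynomial function $p$ and maps $\varphi_k$ satisfying the boundary condition. Condition (BC): $f(\mathbf{x}_k^0)\le f(\mathbf{x})\le f(\mathbf{x}_k^1)$ for all $k$ and $\mathbf{x}$. For $k\in[n]$, $a_k\in X_k$: $$\Phi_k^-(a_k)=\bigvee_{\mathbf{x}:\,x_k=a_k}\operatorname{cl}\big(f(\mathbf{x})\wedge\overline{f(\mathbf{x}_k^0)}\big),\qquad \Phi_k^+(a_k)=\bigwedge_{\mathbf{x}:\,x_k=a_k}\operatorname{int}\big(f(\mathbf{x})\vee\overline{f(\mathbf{x}_k^1)}\big),$$ ranging over all $\mathbf{x}$ with $k$-th component $a_k$. *)

From HB Require Import structures.
From mathcomp Require Import all_boot all_order.
From Stdlib Require Import ClassicalDescription.
Set Implicit Arguments. Unset Strict Implicit. Unset Printing Implicit Defensive.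
Import Order.TTheory.

(* A Prop turned into a bool (classically), used to form arbitrary
   unions / intersections of subsets of the finite set U. *)
Definition asb (P : Prop) : bool :=
  if excluded_middle_informative P then true else false.

Section Defs.
Variable U : finType.

Definition set_lattice (Y : {set {set U}}) : Prop :=
  [/\ set0 \in Y, setT \in Y,
      (forall a b, a \in Y -> b \in Y -> a :&: b \in Y) &
      (forall a b, a \in Y -> b \in Y -> a :|: b \in Y)].

Definition cl (Y : {set {set U}}) (S : {set U}) : {set U} :=
  \bigcap_(y in Y | S \subset y) y.
Definition int (Y : {set {set U}}) (S : {set U}) : {set U} :=
  \bigcup_(y in Y | y \subset S) y.

Inductive lterm (n : nat) : Type :=
| LVar of 'I_n
| LConst of {set U}
| LMeet of lterm n & lterm n
| LJoin of lterm n & lterm n.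

Fixpoint leval n (t : lterm n) (v : 'I_n -> {set U}) : {set U} :=
  match t with
  | LVar i => v i
  | LConst c => c
  | LMeet t1 t2 => leval t1 v :&: leval t2 v
  | LJoin t1 t2 => leval t1 v :|: leval t2 v
  end.

Fixpoint consts_in n (Y : {set {set U}}) (t : lterm n) : Prop :=
  match t with
  | LVar _ => True
  | LConst c => c \in Y
  | LMeet t1 t2 => consts_in Y t1 /\ consts_in Y t2
  | LJoin t1 t2 => consts_in Y t1 /\ consts_in Y t2
  end.

Variables (n : nat) (X : 'I_n -> Type) (z o : forall i, X i).

Definition upd (x : forall i, X i) (k : 'I_n) (a : X k) : forall i, X i :=
  dfwith x a.

Definition boundary (phi : forall k, X k -> {set U}) : Prop :=
  forall k a, phi k (z k) \subset phi k a /\ phi k a \subset phi k (o k).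

Definition pseudo_polynomial (Y : {set {set U}}) (f : (forall i, X i) -> {set U}) : Prop :=
  exists (t : lterm n) (phi : forall k, X k -> {set U}),
    [/\ consts_in Y t, (forall k a, phi k a \in Y), boundary phi &
        forall x, f x = leval t (fun k => phi k (x k))].

Definition BC (f : (forall i, X i) -> {set U}) : Prop :=
  forall k x, f (upd x (z k)) \subset f x /\ f x \subset f (upd x (o k)).

(* Phi_k^-(a) = join over x with x_k = a of cl(f x /\ ~ f(x_k^0)) *)
Definition Phim (Y : {set {set U}}) (f : (forall i, X i) -> {set U}) (k : 'I_n) (a : X k)
  : {set U} :=
  [set u | asb (exists x : forall i, X i,
                  x k = a /\ u \in cl Y (f x :&: ~: f (upd x (z k))))].

(* Phi_k^+(a) = meet over x with x_k = a of int(f x \/ ~ f(x_k^1)) *)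
Definition Phip (Y : {set {set U}}) (f : (forall i, X i) -> {set U}) (k : 'I_n) (a : X k)
  : {set U} :=
  [set u | asb (forall x : forall i, X i,
                  x k = a -> u \in int Y (f x :|: ~: f (upd x (o k))))].
End Defs.

From HB Require Import structures.
From mathcomp Require Import all_boot all_order.
From Stdlib Require Import ClassicalDescription ClassicalEpsilon.
Import Order.TTheory.
Local Open Scope order_scope.
Set Implicit Arguments. Unset Strict Implicit.

(* Part 1 (Phi_k^- and Phi_k^+ are monotone): if a <= b in X_k then every x with
   x_k = a is dominated by x_k^b, which has k-th component b and the same
   value at x_k^0 (resp. x_k^1); since cl and int are monotone operators, the
   join (resp. meet) defining Phi_k^-(a) is below the one for b.
   Part 2 (monotone representation): given f x = p(phi_1(x_1),...,phi_n(x_n)),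
   write b <=_k a when f(x_k^b) is contained in f(x_k^a) for every x.  This
   preorder contains the order of X_k, has 0 at the bottom and 1 at the top
   (by (BC)), and f(y) <= f(x) whenever y_k <=_k x_k for all k ("chain").
   The monotone hull psi_k(a) = \/ {phi_k(b) | b <=_k a} is a union of members
   of Y, hence in Y; it is monotone, satisfies the boundary condition, and
   still represents f: p(psi) >= p(phi) = f, and conversely each point u of
   p(psi(x)) lies in p(phi(b)) = f(b) for suitable b_k <=_k x_k, so in f(x). *)

Lemma asbP (P : Prop) : asb P <-> P.
Proof.
by rewrite /asb; case: (ClassicalDescription.excluded_middle_informative P); split.
Qed.

Lemma dependent_choice (I : Type) (T : I -> Type) (P : forall i, T i -> Prop) :
  (forall i, exists c, P i c) -> exists g : forall i, T i, forall i, P i (g i).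
Proof.
move=> ex; exists (fun i => proj1_sig (constructive_indefinite_description _ (ex i))).
by move=> i; case: constructive_indefinite_description.
Qed.

Section LatticeFacts.
Variable U : finType.

Lemma cl_mono (Y : {set {set U}}) (S S' : {set U}) :
  S \subset S' -> cl Y S \subset cl Y S'.
Proof.
move=> SS'; apply/bigcapsP => y /andP[yY S'y]; apply: bigcap_inf.
by rewrite yY (subset_trans SS' S'y).
Qed.

Lemma int_mono (Y : {set {set U}}) (S S' : {set U}) :
  S \subset S' -> int Y S \subset int Y S'.
Proof.
move=> SS'; apply/bigcupsP => y /andP[yY yS]; apply: bigcup_sup.
by rewrite yY (subset_trans yS SS').
Qed.

Lemma bigcup_in_lattice (Y : {set {set U}}) (P : pred {set U}) :
  set_lattice Y -> \bigcup_(y in Y | P y) y \in Y.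
Proof.
case=> Y0 _ _ YU; apply: (big_ind (fun s : {set U} => s \in Y)) => //.
by move=> y /andP[].
Qed.

Lemma leval_mono n (t : lterm U n) (v w : 'I_n -> {set U}) :
  (forall k, v k \subset w k) -> leval t v \subset leval t w.
Proof.
move=> vw; elim: t => [i|c|t1 IH1 t2 IH2|t1 IH1 t2 IH2] //=.
- exact: setISS.
- exact: setUSS.
Qed.

Lemma leval_mem n (t : lterm U n) (v w : 'I_n -> {set U}) u :
  (forall k, (u \in v k) = (u \in w k)) -> (u \in leval t v) = (u \in leval t w).
Proof.
move=> vw; elim: t => [i|c|t1 IH1 t2 IH2|t1 IH1 t2 IH2] //=.
- by rewrite !inE IH1 IH2.
- by rewrite !inE IH1 IH2.
Qed.

End LatticeFacts.

Section Update.
Variables (n : nat) (X : 'I_n -> Type).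

Lemma upd_at (x : forall i, X i) k (a : X k) : upd x a k = a.
Proof. exact: dfwith_in. Qed.

Lemma upd_upd (x : forall i, X i) k (a b : X k) i : upd (upd x a) b i = upd x b i.
Proof.
by rewrite /upd; case: (dfwithP (dfwith x a) b i) => [|j kj]; rewrite ?dfwith_in ?dfwith_out.
Qed.

Lemma upd_self (x : forall i, X i) k i : upd x (x k) i = x i.
Proof. by rewrite /upd; case: dfwithP. Qed.

End Update.

Section MonotoneBC.
Variables (U : finType) (n : nat) (d : Order.disp_t) (X : 'I_n -> porderType d).
Variables (z o : forall i, X i) (f : (forall i, X i) -> {set U}).
Hypothesis fBC : BC z o f.
Hypothesis fmono : forall x y : forall i, X i, (forall i, x i <= y i) -> f x \subset f y.

Lemma f_ext (x y : forall i, X i) : (forall i, x i = y i) -> f x = f y.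
Proof. by move=> xy; apply/eqP; rewrite eqEsubset !fmono // => i; rewrite xy. Qed.

Lemma f_upd_mono (x : forall i, X i) k (a b : X k) : a <= b -> f (upd x a) \subset f (upd x b).
Proof.
move=> ab; apply: fmono => i; rewrite /upd.
by case: (dfwithP x a i) => [|j kj]; rewrite ?dfwith_in ?dfwith_out.
Qed.

Lemma f_le_upd (x : forall i, X i) k (b : X k) : x k <= b -> f x \subset f (upd x b).
Proof. by move=> xb; rewrite -(f_ext (upd_self x k)); exact: f_upd_mono. Qed.

Lemma f_upd_le (x : forall i, X i) k (a : X k) : a <= x k -> f (upd x a) \subset f x.
Proof. by move=> ax; rewrite -(f_ext (upd_self x k)); exact: f_upd_mono. Qed.

Lemma Phim_mono (Y : {set {set U}}) k (a b : X k) : a <= b -> Phim z Y f a \subset Phim z Y f b.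
Proof.
move=> ab; apply/subsetP => u; rewrite !inE => /asbP [x [xk ux]]; apply/asbP.
exists (upd x b); split; first exact: upd_at.
apply: (subsetP (cl_mono _ _)) ux; apply: setISS; first by rewrite f_le_upd ?xk.
by rewrite (f_ext (upd_upd x b (z k))).
Qed.

Lemma Phip_mono (Y : {set {set U}}) k (a b : X k) : a <= b -> Phip o Y f a \subset Phip o Y f b.
Proof.
move=> ab; apply/subsetP => u; rewrite !inE => /asbP ua; apply/asbP => x xk.
have := ua (upd x a) (upd_at x a); apply: (subsetP (int_mono _ _)).
apply: setUSS; first by rewrite f_upd_le ?xk.
by rewrite (f_ext (upd_upd x a (o k))).
Qed.

Definition f_below k (b a : X k) : Prop := forall x, f (upd x b) \subset f (upd x a).

Lemma f_below_refl k (a : X k) : f_below a a.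
Proof. by []. Qed.

Lemma f_below_trans k (a b c : X k) : f_below a b -> f_below b c -> f_below a c.
Proof. by move=> ab bc x; exact: subset_trans (ab x) (bc x). Qed.

Lemma f_below_le k (a b : X k) : a <= b -> f_below a b.
Proof. by move=> ab x; exact: f_upd_mono. Qed.

Lemma f_below_z k (a : X k) : f_below (z k) a.
Proof. by move=> x; have [+ _] := fBC k (upd x a); rewrite (f_ext (upd_upd x a (z k))). Qed.

Lemma f_below_o k (a : X k) : f_below a (o k).
Proof. by move=> x; have [_ +] := fBC k (upd x a); rewrite (f_ext (upd_upd x a (o k))). Qed.

Lemma f_below_chain (y x : forall i, X i) :
  (forall k, f_below (y k) (x k)) -> f y \subset f x.
Proof.
move=> yx.
(* Invariant: y' differs from x only at indices in s, all f-below x. *)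
suff chain (s : seq 'I_n) (y' : forall i, X i) :
    (forall k, y' k != x k -> k \in s) ->
    (forall k, f_below (y' k) (x k)) -> f y' \subset f x.
  by apply: (chain (enum 'I_n)) => // k _; rewrite mem_enum.
elim: s y' => [|k s IH] y' diff y'x.
  by rewrite (f_ext (y := x)) // => i; apply/eqP/negPn/negP => /diff.
have step : f y' \subset f (upd y' (x k)).
  by rewrite -(f_ext (upd_self y' k)); exact: y'x.
apply: subset_trans step (IH _ _ _) => i; rewrite /upd; case: dfwithP => [|j kj].
- by rewrite eqxx.
- by move/diff; rewrite inE eq_sym (negbTE kj).
- exact: f_below_refl.
- exact: y'x.
Qed.

End MonotoneBC.

Section MonotoneHull.
Variables (U : finType) (Y : {set {set U}}) (n : nat).
Variables (d : Order.disp_t) (X : 'I_n -> porderType d).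
Variables (z o : forall i, X i) (f : (forall i, X i) -> {set U}).
Hypothesis HY : set_lattice Y.
Hypothesis fBC : BC z o f.
Hypothesis fmono : forall x y : forall i, X i, (forall i, x i <= y i) -> f x \subset f y.
Variables (t : lterm U n) (phi : forall k, X k -> {set U}).
Arguments phi : clear implicits.
Hypothesis phiY : forall k a, phi k a \in Y.
Hypothesis frep : forall x, f x = leval t (fun k => phi k (x k)).

Definition hull k (a : X k) : {set U} :=
  \bigcup_(y in Y | asb (exists b, f_below f b a /\ phi k b = y)) y.

Lemma hullP k (a : X k) u :
  u \in hull a <-> exists b, f_below f b a /\ u \in phi k b.
Proof.
split; first by case/bigcupP => y /andP[_ /asbP [b [ba <-]]] uy; exists b.
case=> b [ba ub]; apply/bigcupP; exists (phi k b) => //.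
by rewrite phiY; apply/asbP; exists b.
Qed.

Lemma hull_in_lattice k (a : X k) : hull a \in Y.
Proof. exact: bigcup_in_lattice. Qed.

Lemma phi_sub_hull k (a : X k) : phi k a \subset hull a.
Proof. by apply/subsetP => u ua; apply/hullP; exists a; split. Qed.

Lemma hull_below k (a b : X k) : f_below f a b -> hull a \subset hull b.
Proof.
move=> ab; apply/subsetP => u /hullP [c [ca uc]]; apply/hullP.
by exists c; split => //; exact: f_below_trans ca ab.
Qed.

Lemma hull_mono k (a b : X k) : a <= b -> hull a \subset hull b.
Proof. by move=> ab; apply/hull_below/f_below_le. Qed.

Lemma hull_boundary : boundary z o hull.
Proof. by move=> k a; split; apply: hull_below; [exact: f_below_z | exact: f_below_o]. Qed.

(* The hull represents f by the same polynomial: the witnesses b_k <=_k x_k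
   for a point u are combined into one argument b with f b <= f x. *)
Lemma hull_represents x : f x = leval t (fun k => hull (x k)).
Proof.
apply/eqP; rewrite eqEsubset {1}frep (leval_mono t (fun k => phi_sub_hull (x k))) /=.
apply/subsetP => u.
have witness k : exists c, f_below f c (x k) /\ (u \in phi k c) = (u \in hull (x k)).
  case E: (u \in hull (x k)); first by case/hullP: E => c [cx uc]; exists c; rewrite uc.
  by exists (x k); split => //; apply: contraFF E; exact: (subsetP (phi_sub_hull _)).
have [b bP] := dependent_choice witness.
rewrite -(@leval_mem _ _ t (fun k => phi k (b k))) => [ub|k]; last by case: (bP k).
rewrite -frep in ub.
by apply: (subsetP (f_below_chain fmono (fun k => proj1 (bP k)))).
Qed.

End MonotoneHull.

Theorem mainTheorem10 (U : finType) (Y : {set {set U}}) (n : nat)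
  (d : Order.disp_t) (X : 'I_n -> porderType d)
  (z o : forall i, X i) (zo : forall i, z i <> o i)
  (f : (forall i, X i) -> {set U})
  (HY : set_lattice Y)
  (fY : forall x, f x \in Y)
  (fBC : BC z o f)
  (fmono : forall x y : forall i, X i, (forall i, x i <= y i) -> f x \subset f y) :
  (forall (k : 'I_n) (a b : X k), a <= b ->
     Phim z Y f a \subset Phim z Y f b /\ Phip o Y f a \subset Phip o Y f b) /\
  (pseudo_polynomial z o Y f ->
     exists (t : lterm U n) (phi : forall k, X k -> {set U}),
       [/\ consts_in Y t, (forall k a, phi k a \in Y), boundary z o phi,
           (forall k (a b : X k), a <= b -> phi k a \subset phi k b) &
           forall x, f x = leval t (fun k => phi k (x k))]).
Proof.
split=> [k a b ab | [t [phi [tY phiY _ frep]]]].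
  by split; [exact: Phim_mono | exact: Phip_mono].
exists t, (hull Y f phi); split => //.
- by move=> k a; exact: hull_in_lattice.
- exact: hull_boundary.
- by move=> k a b; exact: hull_mono.
- exact: hull_represents.
Qed.
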